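(* Let $p,g\in\mathbb{Q}[x]$ with $p$ irreducible in $\mathbb{Q}[x]$ and $p\nmid g$. Suppose there exist $N\in\mathbb{N}$, $\overline h_1,\dots,\overline h_N\in\mathbb{Q}[x]$ with $\deg\overline h_i<\deg p$, and $\omega_1,\dots,\omega_N\in\mathbb{Q}_{>0}$ such that $g\equiv\sum_{i=1}^N\omega_i\overline h_i^2\pmod p$. Then for every integer $e\ge1$ there exist $h_1,\dots,h_N\in\mathbb{Q}[x]$ with $\deg h_i<e\deg p$ such that $g\equiv\sum_{i=1}^N\omega_ih_i^2\pmod{p^e}$. *)

From mathcomp Require Import all_boot all_order all_algebra.
Set Implicit Arguments. Unset Strict Implicit. Unset Printing Implicit Defensive.
Import GRing.Theory Num.Theory.
Local Open Scope ring_scope.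

(* deg h < d  (with deg 0 = -oo), written via size = deg + 1 *)
Definition deg_lt (h : {poly rat}) (d : nat) : bool := (size h <= d)%N.

From mathcomp Require Import all_boot all_order all_algebra.
From mathcomp Require Import ring.
Set Implicit Arguments. Unset Strict Implicit.
Import GRing.Theory Num.Theory.
Local Open Scope ring_scope.

(* Modulo p the relation g = sum_i w_i h_i^2 has some h_j prime to p, since
   otherwise p would divide g.  With all other h_i fixed, h_j is a simple root
   of the polynomial c X^2 - r modulo p (c = w_j and 2 are units), so Hensel's
   lemma lifts it to a solution modulo every p^e.  Reducing all h_i modulo p^e then
   keeps the congruence and gives deg h_i < e deg p. *)

Lemma dvdp_sum (R : idomainType) (I : Type) (s : seq I) (P : pred I)
    (F : I -> {poly R}) (d : {poly R}) :
  (forall i, P i -> d %| F i) -> d %| \sum_(i <- s | P i) F i.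
Proof.
by move=> dF; apply: (big_ind (fun x => d %| x)) => //; apply: dvdp_add.
Qed.

Section SquareLifting.

Variable F : fieldType.
Hypothesis two_neq0 : (2%:R : F) != 0.

Lemma lift_sqr_step (p r h : {poly F}) (c : F) (k : nat) :
  c != 0 -> coprimep h p -> p ^+ k.+1 %| r - c *: h ^+ 2 ->
  exists2 h', coprimep h' p & p ^+ k.+2 %| r - c *: h' ^+ 2.
Proof.
move=> c0 hp /dvdpP [s Es].
have [[u v] /= Euv] := Bezout_eq1_coprimepP _ _ hp.
set q := p ^+ k.+1 in Es *.
(* Newton step: t solves 2 c h t = s modulo p, with u the inverse of h mod p. *)
pose t := ((2%:R * c)^-1)%:P * s * u.
have Et : 2%:R * c%:P * t = s * u.
  rewrite /t !mulrA -polyCMn -!polyCM mulfV ?mul1r //.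
  by rewrite mulf_neq0 // -polyCMn polyC_eq0.
exists (h + t * q).
  by rewrite /q exprSr mulrA coprimep_sym addrC coprimep_addl_mul coprimep_sym.
have -> : r - c *: (h + t * q) ^+ 2 = (s * v) * (q * p) - c%:P * t ^+ 2 * q ^+ 2.
  have Er : r = s * q + c%:P * h ^+ 2 by rewrite -Es -mul_polyC subrK.
  have Eu : u * h = 1 - v * p by rewrite -Euv addrK.
  rewrite Er -mul_polyC.
  transitivity (s * q - 2%:R * c%:P * t * h * q - c%:P * t ^+ 2 * q ^+ 2).
    by ring.
  by rewrite Et -(mulrA s u h) Eu; ring.
have qp : p ^+ k.+2 = q * p by rewrite exprSr.
rewrite qp dvdp_sub //; first exact: dvdp_mull.
apply: dvdp_mull; rewrite expr2; apply: dvdp_mul => //.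
by rewrite /q exprS dvdp_mulr.
Qed.

Lemma lift_sqr (p r h : {poly F}) (c : F) (e : nat) :
  c != 0 -> coprimep h p -> p %| r - c *: h ^+ 2 -> (1 <= e)%N ->
  exists h', p ^+ e %| r - c *: h' ^+ 2.
Proof.
move=> c0 hp dvd1; case: e => // e _.
suff [h' _ dvd_e] : exists2 h', coprimep h' p & p ^+ e.+1 %| r - c *: h' ^+ 2.
  by exists h'.
elim: e => [|e [h' h'p dvd_e]]; first by exists h; rewrite ?expr1.
exact: lift_sqr_step c0 h'p dvd_e.
Qed.

Lemma lift_wsum_sqr (I : finType) (p g : {poly F}) (w : I -> F)
    (h : I -> {poly F}) (j : I) (e : nat) :
  w j != 0 -> coprimep (h j) p -> p %| g - \sum_i w i *: h i ^+ 2 ->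
  (1 <= e)%N -> exists h' : I -> {poly F},
    p ^+ e %| g - \sum_i w i *: h' i ^+ 2.
Proof.
move=> wj0 hjp dvd1 e_gt0.
pose r := g - \sum_(i | i != j) w i *: h i ^+ 2.
have split_j (h' : I -> {poly F}) : (forall i, i != j -> h' i = h i) ->
    g - \sum_i w i *: h' i ^+ 2 = r - w j *: h' j ^+ 2.
  move=> h'E; rewrite (bigD1 j) //= opprD addrA addrAC /r.
  by congr (_ - _ - _); apply: eq_bigr => i /h'E ->.
rewrite split_j // in dvd1.
have [x dvd_e] := lift_sqr wj0 hjp dvd1 e_gt0.
exists (fun i => if i == j then x else h i).
by rewrite split_j ?eqxx // => i /negbTE ->.
Qed.

End SquareLifting.

Lemma dvdp_sqr_sub_modp (F : fieldType) (d h : {poly F}) :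
  d %| h ^+ 2 - (h %% d) ^+ 2.
Proof. by rewrite subr_sqr dvdp_mulr // {1}(divp_eq h d) addrK dvdp_mull. Qed.

Lemma dvdp_wsum_sqr_modp (F : fieldType) (I : finType) (d g : {poly F})
    (w : I -> F) (h : I -> {poly F}) :
  d %| g - \sum_i w i *: h i ^+ 2 ->
  d %| g - \sum_i w i *: (h i %% d) ^+ 2.
Proof.
move=> dvd_d.
have -> : g - \sum_i w i *: (h i %% d) ^+ 2 =
    (g - \sum_i w i *: h i ^+ 2) + \sum_i w i *: (h i ^+ 2 - (h i %% d) ^+ 2).
  by rewrite -(eq_bigr _ (fun i _ => esym (scalerBr _ _ _))) sumrB addrA subrK.
rewrite dvdp_add // dvdp_sum // => i _.
by rewrite -mul_polyC dvdp_mull // dvdp_sqr_sub_modp.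
Qed.

Lemma size_modp_exp (F : fieldType) (p h : {poly F}) (e : nat) :
  p != 0 -> (size (h %% p ^+ e)%R <= e * (size p).-1)%N.
Proof.
move=> p0; rewrite mulnC -size_exp -ltnS prednK ?ltn_modpN0 ?expf_neq0 //.
by rewrite size_poly_gt0 expf_neq0.
Qed.

Lemma exists_coprime_summand (F : fieldType) (I : finType) (p g : {poly F})
    (w : I -> F) (h : I -> {poly F}) :
  irreducible_poly p -> ~~ (p %| g) -> p %| g - \sum_i w i *: h i ^+ 2 ->
  exists j, coprimep (h j) p.
Proof.
move=> irr_p p_ndvd_g dvd1.
have [j hjp | all_dvd] := pickP (fun i => coprimep (h i) p); first by exists j.
case/negP: p_ndvd_g; rewrite -(subrK (\sum_i w i *: h i ^+ 2) g).
rewrite dvdp_add // dvdp_sum // => i _.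
move: (all_dvd i); rewrite /= coprimep_sym irreducible_poly_coprime // => /negbFE.
by rewrite -mul_polyC expr2 => /(dvdp_mulr (h i)); apply: dvdp_mull.
Qed.

Theorem mainTheorem7 (p g : {poly rat}) (N : nat)
  (hbar : 'I_N -> {poly rat}) (w : 'I_N -> rat) :
  irreducible_poly p -> ~~ (p %| g) ->
  (forall i, 0 < w i) ->
  (forall i, deg_lt (hbar i) (size p).-1) ->
  p %| g - \sum_(i < N) w i *: (hbar i) ^+ 2 ->
  forall e : nat, (1 <= e)%N ->
  exists h : 'I_N -> {poly rat},
    (forall i, deg_lt (h i) (e * (size p).-1)) /\
    p ^+ e %| g - \sum_(i < N) w i *: (h i) ^+ 2.
Proof.
move=> irr_p p_ndvd_g w_gt0 _ dvd1 e e_gt0.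
have [j hjp] := exists_coprime_summand irr_p p_ndvd_g dvd1.
have wj0 : w j != 0 by rewrite lt0r_neq0.
have [h dvd_e] := lift_wsum_sqr (isT : 2%:R != 0 :> rat) wj0 hjp dvd1 e_gt0.
have p0 : p != 0 by case: irr_p => /ltnW; rewrite size_poly_gt0.
exists (fun i => h i %% p ^+ e); split; last exact: dvdp_wsum_sqr_modp.
by move=> i; apply: size_modp_exp.
Qed.
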